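(* Let $t=t(z)$ denote the unique formal power series in $z$ (in fact a power series in $z^3$) with zero constant term satisfying $z^3=t(1-t)^2$; thus $t=z^3+2z^6+\cdots$. Then for every $k\ge 0$, \[ f_k(z)=\frac{t^k}{z^k(1-t)}\qquad\text{and}\qquad g_k(z)=\frac{t^{k+1}}{z^{k+2}}, \] where the right-hand sides are interpreted as formal power series in $z$ (they are, since $t/z^3$ is a power series with constant term $1$).
   Context: An S-Motzkin path is a lattice path from $(0,0)$ using up steps $u=(1,1)$, horizontal steps $h=(1,0)$ and down steps $d=(1,-1)$, never going below the $x$-axis, ending on the $x$-axis, such that after deleting the down steps the remaining word is $huhu\cdots hu$. Partial S-Motzkin paths are their prefixes. The numbers $a_{n,k}$ (resp. $b_{n,k}$), $n,k\ge0$, count partial S-Motzkin paths of length $n$ ending at height $k$ whose last non-down step is an up step (resp. a horizontal step); equivalently they are defined by $a_{0,0}=1$, $b_{0,0}=0$, $a_{0,k}=b_{0,k}=0$ for $k\ge1$, and for $n\ge1$, $k\ge0$: $a_{n,k}=b_{n-1,k-1}+a_{n-1,k+1}$, $b_{n,k}=a_{n-1,k}+b_{n-1,k+1}$, with $b_{n-1,-1}=0$. Generating functions: $f_k(z)=\sum_{n\ge0}a_{n,k}z^n$, $g_k(z)=\sum_{n\ge0}b_{n,k}z^n$. *)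

(* Formal power series in z with rational coefficients are
   represented by their coefficient sequences  nat -> rat. *)
From mathcomp Require Import all_boot all_order all_algebra.
Set Implicit Arguments. Unset Strict Implicit. Unset Printing Implicit Defensive.
Import Order.TTheory GRing.Theory Num.Theory.
Local Open Scope ring_scope.

Definition series := nat -> rat.

Definition sone : series := fun n => (n == 0%N)%:R.
Definition sX (m : nat) : series := fun n => (n == m)%:R.
Definition ssub (s u : series) : series := fun n => s n - u n.
Definition smul (s u : series) : series :=
  fun n => \sum_(i < n.+1) s i * u (n - i)%N.
Definition spow (s : series) (k : nat) : series := iter k (smul s) sone.
(* division by z^m of a series whose first m coefficients vanish *)
Definition shift (m : nat) (s : series) : series := fun n => s (n + m)%N.
(* 1/(1-t) for a series t with zero constant term: sum_j t^j
   (coefficient n only gets contributions from j <= n). *)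
Definition inv1m (t : series) : series :=
  fun n => \sum_(j < n.+1) spow t j n.

(* the numbers a_{n,k}, b_{n,k} via the recursion of the paper:
   ab n = (fun k => a_{n,k}, fun k => b_{n,k}) *)
Fixpoint ab (n : nat) : (nat -> nat) * (nat -> nat) :=
  match n with
  | 0 => (fun k => nat_of_bool (k == 0%N), fun _ => 0%N)
  | n'.+1 =>
      let a := (ab n').1 in let b := (ab n').2 in
      (fun k => ((if k is k'.+1 then b k' else 0%N) + a k.+1)%N,
       fun k => (a k + b k.+1)%N)
  end.

Definition a_nk (n k : nat) : nat := (ab n).1 k.
Definition b_nk (n k : nat) : nat := (ab n).2 k.

Definition f_ (k : nat) : series := fun n => (a_nk n k)%:R.
Definition g_ (k : nat) : series := fun n => (b_nk n k)%:R.

(* Power series are coefficient sequences; we reason about them through their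
   truncations modulo X^N, which are polynomials.  Then:
   - the recursion for a_{n,k}, b_{n,k} is the system f_0 = 1 + z f_1,
     f_(k+1) = z (g_k + f_(k+2)), g_k = z (f_k + g_(k+1)), whose coefficients
     determine any solution uniquely (gf_unique);
   - t exists as the limit of the iteration p |-> z^3 + 2 p^2 - p^3, which is
     contracting on series divisible by z;
   - writing t = z^2 V and I = 1/(1 - t), the equation for t gives
     I = 1 + z^2 V I and V = z I + z^2 V^2, from which the closed forms
     (z V)^k I and z^k V^(k+1) satisfy the system above. *)

From mathcomp Require Import all_boot all_order all_algebra.
From mathcomp Require Import ring zify.
Import GRing.Theory.
Local Open Scope ring_scope.

(* It is compatible with the ring operations, which lets us compute with
   truncations of power series as with the series themselves. *)
Section CongruenceModXn.
Context {R : nzRingType}.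
Implicit Types p q r : {poly R}.

Definition eqm (N : nat) p q := forall i, (i < N)%N -> p`_i = q`_i.

Lemma eqm_refl N p : eqm N p p.
Proof. by []. Qed.

Lemma eqm_sym {N p q} : eqm N p q -> eqm N q p.
Proof. by move=> pq i Hi; rewrite pq. Qed.

Lemma eqm_trans {N p q r} : eqm N p q -> eqm N q r -> eqm N p r.
Proof. by move=> pq qr i Hi; rewrite pq ?qr. Qed.

Lemma eqm_le {M N p q} : (N <= M)%N -> eqm M p q -> eqm N p q.
Proof. by move=> NM pq i Hi; apply: pq; apply: leq_trans NM. Qed.

Lemma eqm_transport {N p q p' q'} : eqm N p' q' -> p = p' -> q = q' -> eqm N p q.
Proof. by move=> pq -> ->. Qed.

Lemma eqmD {N p p' q q'} : eqm N p p' -> eqm N q q' -> eqm N (p + q) (p' + q').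
Proof. by move=> pp qq i Hi; rewrite !coefD pp ?qq. Qed.

Lemma eqmB {N p p' q q'} : eqm N p p' -> eqm N q q' -> eqm N (p - q) (p' - q').
Proof. by move=> pp qq i Hi; rewrite !coefB pp ?qq. Qed.

Lemma eqmM {N p p' q q'} : eqm N p p' -> eqm N q q' -> eqm N (p * q) (p' * q').
Proof.
move=> pp qq i Hi; rewrite !coefM; apply: eq_bigr => j _.
have Hj := ltn_ord j.
by rewrite pp ?qq //; lia.
Qed.

Lemma eqmX {N p q} k : eqm N p q -> eqm N (p ^+ k) (q ^+ k).
Proof.
move=> pq; elim: k => [|k IH]; first by [].
by rewrite !exprS; apply: eqmM.
Qed.

Lemma eqm_sub0 {N p q} : eqm N p q <-> eqm N (p - q) 0.
Proof.
split=> pq i Hi; have := pq i Hi; rewrite coefB coef0.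
  by move=> ->; rewrite subrr.
by move/eqP; rewrite subr_eq0 => /eqP.
Qed.

Lemma eqm0M {a b p q} : eqm a p 0 -> eqm b q 0 -> eqm (a + b) (p * q) 0.
Proof.
move=> p0 q0 i Hi; rewrite coefM coef0 big1 // => j _.
have Hj := ltn_ord j.
case: (ltnP j a) => ja; first by rewrite p0 // coef0 mul0r.
by rewrite q0 ?coef0 ?mulr0 //; lia.
Qed.

Lemma eqm0X {a p} j : eqm a p 0 -> eqm (a * j) (p ^+ j) 0.
Proof.
move=> p0; elim: j => [|j IH]; first by move=> i; rewrite muln0.
by rewrite exprS mulnS; apply: eqm0M.
Qed.

Lemma eqm_MXn k {N p q} : eqm (k + N) ('X^k * p) ('X^k * q) <-> eqm N p q.
Proof.
split=> pq i Hi.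
  have ki : (k + i < k)%N = false by lia.
  by have := pq (k + i)%N; rewrite !coefXnM ki addKn; apply; lia.
by rewrite !coefXnM; case: ltnP => // ki; apply: pq; lia.
Qed.

End CongruenceModXn.

Definition trunc (N : nat) (s : series) : {poly rat} := \poly_(i < N) s i.

Definition sadd (s u : series) : series := fun n => s n + u n.

Section Truncation.
Implicit Types s u : series.

Lemma coef_trunc N s i : (i < N)%N -> (trunc N s)`_i = s i.
Proof. by rewrite coef_poly => ->. Qed.

Lemma trunc_le M N s : (N <= M)%N -> eqm N (trunc M s) (trunc N s).
Proof. by move=> NM i Hi; rewrite !coef_trunc //; lia. Qed.

Lemma trunc_ext N s u : s =1 u -> trunc N s = trunc N u.
Proof. by move=> su; apply: eq_poly => i _. Qed.

Lemma trunc_add N s u : trunc N (sadd s u) = trunc N s + trunc N u.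
Proof. by apply/polyP => i; rewrite coefD !coef_poly; case: ifP; rewrite ?addr0. Qed.

Lemma trunc_sub N s u : trunc N (ssub s u) = trunc N s - trunc N u.
Proof. by apply/polyP => i; rewrite coefB !coef_poly; case: ifP; rewrite ?subr0. Qed.

Lemma trunc_one N : eqm N (trunc N sone) 1.
Proof. by move=> i Hi; rewrite coef1 coef_trunc. Qed.

Lemma trunc_X N m : eqm N (trunc N (sX m)) 'X^m.
Proof. by move=> i Hi; rewrite coefXn coef_trunc. Qed.

Lemma trunc_mul N s u : eqm N (trunc N (smul s u)) (trunc N s * trunc N u).
Proof.
move=> i Hi; rewrite coef_trunc // coefM; apply: eq_bigr => j _.
have Hj := ltn_ord j.
by rewrite !coef_trunc //; lia.
Qed.

Lemma trunc_pow N s k : eqm N (trunc N (spow s k)) (trunc N s ^+ k).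
Proof.
elim: k => [|k IH]; first exact: trunc_one.
by rewrite exprS; apply: eqm_trans (trunc_mul _ _ _) _; apply: eqmM.
Qed.

Lemma trunc_shift k N s p :
  eqm (k + N) (trunc (k + N) s) ('X^k * p) -> eqm N (trunc N (shift k s)) p.
Proof.
move=> sp i Hi; rewrite coef_trunc // /shift.
have ik : (i + k < k)%N = false by lia.
have := sp (i + k)%N; rewrite coef_trunc ?coefXnM ?ik ?addnK; last lia.
by apply; lia.
Qed.

Lemma series_eq_trunc s u : (forall N, eqm N (trunc N s) (trunc N u)) -> s =1 u.
Proof.
by move=> su n; rewrite -(coef_trunc _ s _ (ltnSn n)) -(coef_trunc _ u _ (ltnSn n)); apply: su.
Qed.

Lemma coef_of_trunc s u (c : rat) :
  (forall N, eqm N (trunc N s) (c%:P + 'X * trunc N u)) ->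
  s 0%N = c /\ forall n, s n.+1 = u n.
Proof.
move=> su; split.
  by have := su 1%N 0%N; rewrite coef_trunc // coefD coefC coefXM addr0; apply.
move=> n; have := su n.+2 n.+1; rewrite coef_trunc // coefD coefC coefXM add0r.
by rewrite coef_trunc //; apply.
Qed.

(* For s with zero constant term, inv1m s = sum_j s^j inverts 1 - s: modulo X^N
   it agrees with the geometric sum of the first N powers, and s^N vanishes. *)
Lemma trunc_inv1m N s : s 0%N = 0 -> eqm N ((1 - trunc N s) * trunc N (inv1m s)) 1.
Proof.
move=> s0; set T := trunc N s.
have T0 : eqm 1 T 0 by case=> // _; rewrite coef_poly coef0; case: ifP.
have geom : eqm N (trunc N (inv1m s)) (\sum_(j < N) T ^+ j).
  move=> i Hi; rewrite coef_trunc // /inv1m coef_sum.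
  rewrite (big_ord_widen N (fun j => spow s j i)) //.
  rewrite [RHS](bigID (fun j : 'I_N => (j < i.+1)%N)) /= [X in _ = _ + X]big1 ?addr0.
    by apply: eq_bigr => j _; rewrite -(coef_trunc _ _ _ Hi) (trunc_pow N s j).
  by move=> j; rewrite -leqNgt => ij; rewrite (eqm0X j T0) ?coef0 ?mul1n.
have TN : eqm N (T ^+ N) 0 by rewrite -[X in eqm X]mul1n; apply: eqm0X.
apply: eqm_trans (eqmM (eqm_refl _ _) geom) _.
have -> : (1 - T) * \sum_(j < N) T ^+ j = 1 - T ^+ N.
  by rewrite -[1 - T]opprB mulNr -subrX1 opprB.
by apply: (eqm_transport (eqmB (eqm_refl _ 1) TN)); rewrite ?subr0.
Qed.

End Truncation.

(* In series form this is the system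
     f_0 = 1 + z f_1,   f_(k+1) = z (g_k + f_(k+2)),   g_k = z (f_k + g_(k+1)). *)
Section RecursionUniqueness.
Variables F G : nat -> series.
Hypothesis F0_0 : F 0%N 0%N = 1.
Hypothesis F0_S : forall n, F 0%N n.+1 = F 1%N n.
Hypothesis FS_0 : forall k, F k.+1 0%N = 0.
Hypothesis FS_S : forall k n, F k.+1 n.+1 = G k n + F k.+2 n.
Hypothesis G_0 : forall k, G k 0%N = 0.
Hypothesis G_S : forall k n, G k n.+1 = F k n + G k.+1 n.

Lemma gf_unique k : f_ k =1 F k /\ g_ k =1 G k.
Proof.
suff fgFG n : forall k, f_ k n = F k n /\ g_ k n = G k n.
  by split=> n; have [] := fgFG n k.
elim: n => [|n IH] {}k.
  by rewrite /f_ /g_ /a_nk /b_nk /= G_0; case: k => [|k]; rewrite ?F0_0 ?FS_0.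
have IHa j : ((ab n).1 j)%:R = F j n := proj1 (IH j).
have IHb j : ((ab n).2 j)%:R = G j n := proj2 (IH j).
rewrite /f_ /g_ /a_nk /b_nk /= !natrD G_S !IHa IHb; split=> //.
by case: k => [|k]; rewrite ?add0r ?F0_S // IHb FS_S.
Qed.

End RecursionUniqueness.

(* The equation t (1 - t)^2 = z^3 is the fixed-point equation
   t = phi t with phi t = z^3 + 2 t^2 - t^3, and phi is contracting on series
   divisible by z: phi p - phi q = (p - q) * (2 (p + q) - (p^2 + p q + q^2)).
   The iterates of phi from 0 therefore stabilise coefficientwise. *)
Section Existence.

Definition phi (p : {poly rat}) : {poly rat} := 'X^3 + 2 * p ^+ 2 - p ^+ 3.

Lemma phi_contract {j p q} : eqm 1 p 0 -> eqm 1 q 0 ->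
  eqm j p q -> eqm j.+1 (phi p) (phi q).
Proof.
move=> p0 q0 /eqm_sub0 pq; apply/eqm_sub0; rewrite -addn1.
have factor : phi p - phi q = (p - q) * (2 * (p + q) - (p ^+ 2 + p * q + q ^+ 2)).
  by rewrite /phi; ring.
rewrite factor; apply: eqm0M pq _.
apply: (eqm_transport (eqmB (eqmM (eqm_refl _ 2) (eqmD p0 q0))
  (eqmD (eqmD (eqmX 2 p0) (eqmM p0 q0)) (eqmX 2 q0)))) => //; ring.
Qed.

Lemma phi_divX p : eqm 1 p 0 -> eqm 1 (phi p) 0.
Proof.
move=> p0; apply: eqm_trans (eqm_le (leqnSn 1) (phi_contract p0 (eqm_refl 1 0) p0)) _.
have -> : phi 0 = 'X^3 by rewrite /phi; ring.
by move=> [|i] // _; rewrite coefXn coef0.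
Qed.

Definition approx (m : nat) : {poly rat} := iter m phi 0.

Lemma approx_divX m : eqm 1 (approx m) 0.
Proof. by elim: m => [|m IH] //=; apply: phi_divX. Qed.

Lemma approx_step m : eqm m (approx m.+1) (approx m).
Proof.
elim: m => [|m IH]; first by [].
exact: phi_contract (approx_divX _) (approx_divX _) IH.
Qed.

Lemma approx_cauchy m d : eqm m (approx (m + d)) (approx m).
Proof.
elim: d => [|d IH]; first by rewrite addn0.
apply: eqm_trans _ IH; rewrite addnS.
exact: eqm_le (leq_addr d m) (approx_step _).
Qed.

(* The limit: its n-th coefficient is that of any iterate beyond n. *)
Definition tsol : series := fun n => (approx n.+1)`_n.

Lemma trunc_tsol N : eqm N (trunc N tsol) (approx N).
Proof.
move=> i iN; rewrite coef_trunc // /tsol.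
by rewrite -(subnKC iN) (approx_cauchy i.+1 (N - i.+1)).
Qed.

Lemma tsol_spec : tsol 0%N = 0 /\ sX 3 =1 smul tsol (spow (ssub sone tsol) 2).
Proof.
split; first by rewrite /tsol (approx_divX 1 0) ?coef0.
apply: series_eq_trunc => N; set P := approx N.
apply: eqm_trans (trunc_X _ _) _.
apply: eqm_trans _ (eqm_sym (trunc_mul _ _ _)).
apply: eqm_trans _ (eqm_sym (eqmM (trunc_tsol N)
  (eqm_trans (trunc_pow _ _ 2) (eqmX 2 _)))).
  have /eqm_sub0 fixP := approx_step N.
  apply: (eqm_transport (eqmD (eqm_refl _ (P * (1 - P) ^+ 2)) fixP)).
    by rewrite /= /phi -/P; ring.
  by rewrite addr0.
by rewrite trunc_sub; apply: eqmB (trunc_one _) (trunc_tsol _).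
Qed.

End Existence.

(* Then t = z^2 V with V = t / z^2, the series
   I = inv1m t inverts 1 - t, and z^3 = t (1 - t)^2 becomes z = V (1 - z^2 V)^2.
   From these, I = 1 + z^2 V I and V = z I + z^2 V^2, which are exactly the
   recursions satisfied by the candidates F_k = (z V)^k I and G_k = z^k V^(k+1). *)
Section Verification.
Variable t : series.
Hypothesis t0 : t 0%N = 0.
Hypothesis t_eq : sX 3 =1 smul t (spow (ssub sone t) 2).

Lemma t_coef1 : t 1%N = 0.
Proof.
have := t_eq 1%N; rewrite /smul big_ord_recr big_ord1 /= t0 mul0r add0r.
by rewrite /spow /= /smul !big_ord1 /ssub /sone /= t0 subr0 !mulr1 => <-.
Qed.

Definition Vt N := trunc N (shift 2 t).
Definition It N := trunc N (inv1m t).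

Lemma trunc_t N : eqm N (trunc N t) ('X^2 * Vt N).
Proof.
move=> i iN; rewrite coef_trunc // coefXnM; case: ltnP => i2.
  by case: i {iN} i2 => [|[|i]] //; rewrite ?t0 ?t_coef1.
by rewrite coef_trunc /shift ?subnK //; lia.
Qed.

(* The defining equation divided by z^2: z = V (1 - z^2 V)^2. *)
Lemma cubic_eq N : eqm N 'X (Vt N * (1 - 'X^2 * Vt N) ^+ 2).
Proof.
have tN2 := trunc_t (2 + N).
have h : eqm (2 + N) ('X^2 * 'X) ('X^2 * (Vt (2 + N) * (1 - 'X^2 * Vt (2 + N)) ^+ 2)).
  rewrite -exprSr; apply: eqm_trans (eqm_sym (trunc_X _ 3)) _.
  rewrite (trunc_ext _ _ _ t_eq); apply: eqm_trans (trunc_mul _ _ _) _.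
  have tC : eqm (2 + N) (trunc (2 + N) (ssub sone t)) (1 - 'X^2 * Vt (2 + N)).
    by rewrite trunc_sub; apply: eqmB (trunc_one _) tN2.
  apply: (eqm_transport (eqmM tN2 (eqm_trans (trunc_pow _ _ 2) (eqmX 2 tC)))) => //.
  by rewrite mulrA.
apply: eqm_trans (proj1 (eqm_MXn 2) h) _.
have VN := trunc_le _ _ (shift 2 t) (leq_addl 2 N).
exact: eqmM VN (eqmX 2 (eqmB (eqm_refl _ 1) (eqmM (eqm_refl _ _) VN))).
Qed.

Lemma inverse_eq N : eqm N ((1 - 'X^2 * Vt N) * It N) 1.
Proof.
apply: eqm_trans _ (trunc_inv1m N t t0).
exact: eqmM (eqmB (eqm_refl _ 1) (eqm_sym (trunc_t N))) (eqm_refl _ _).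
Qed.

(* I = 1 + t I, the relation behind f_0 = 1 + z f_1 and f_(k+1) = z (g_k + f_(k+2)). *)
Lemma It_rec N : eqm N (It N) (1 + 'X^2 * Vt N * It N).
Proof.
apply: (eqm_transport (eqmD (inverse_eq N) (eqm_refl _ ('X^2 * Vt N * It N)))) => //.
ring.
Qed.

(* z I = V (1 - t)^2 I = V (1 - t) = V - z^2 V^2, the relation behind
   g_k = z (f_k + g_(k+1)). *)
Lemma Vt_rec N : eqm N (Vt N) ('X * It N + 'X^2 * Vt N ^+ 2).
Proof.
set V := Vt N; set I := It N.
have zI : eqm N ('X * I) (V * (1 - 'X^2 * V)).
  apply: eqm_trans (eqmM (cubic_eq N) (eqm_refl _ I)) _.
  apply: (eqm_transport (eqmM (eqm_refl _ (V * (1 - 'X^2 * V))) (inverse_eq N))).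
    by rewrite /V /I; ring.
  by rewrite mulr1.
apply: (eqm_transport (eqmD (eqm_sym zI) (eqm_refl _ ('X^2 * V ^+ 2)))) => //.
ring.
Qed.

Definition Fsol k : series := smul (shift k (spow t k)) (inv1m t).
Definition Gsol k : series := shift (k + 2) (spow t k.+1).

Lemma trunc_Fsol N k : eqm N (trunc N (Fsol k)) (('X * Vt N) ^+ k * It N).
Proof.
apply: eqm_trans (trunc_mul _ _ _) _; apply: eqmM (eqm_refl _ _).
apply: trunc_shift; apply: eqm_trans (trunc_pow _ _ _) _.
apply: eqm_trans (eqmX k (trunc_t (k + N))) _.
have -> : ('X^2 * Vt (k + N)) ^+ k = 'X^k * ('X * Vt (k + N)) ^+ k.
  by rewrite !exprMn mulrA.
apply/eqm_MXn; apply: eqmX; apply: eqmM (eqm_refl _ _) _.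
exact: trunc_le (leq_addl _ _).
Qed.

Lemma trunc_Gsol N k : eqm N (trunc N (Gsol k)) ('X^k * Vt N ^+ k.+1).
Proof.
apply: trunc_shift; apply: eqm_trans (trunc_pow _ _ _) _.
apply: eqm_trans (eqmX k.+1 (trunc_t _)) _.
have -> : ('X^2 * Vt (k + 2 + N)) ^+ k.+1 = 'X^(k + 2) * ('X^k * Vt (k + 2 + N) ^+ k.+1).
  by rewrite exprMn -exprM mulrA -exprD; congr (_ ^+ _ * _); lia.
apply/eqm_MXn; apply: eqmM (eqm_refl _ _) _; apply: eqmX.
exact: trunc_le (leq_addl _ _).
Qed.

Lemma Fsol0_rec : Fsol 0 0%N = 1 /\ forall n, Fsol 0 n.+1 = Fsol 1 n.
Proof.
apply: coef_of_trunc => N; rewrite polyC1.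
apply: eqm_trans (trunc_Fsol N 0) _.
apply: eqm_trans _ (eqm_sym (eqmD (eqm_refl _ 1) (eqmM (eqm_refl _ 'X) (trunc_Fsol N 1)))).
by apply: (eqm_transport (It_rec N)); ring.
Qed.

Lemma FsolS_rec k :
  Fsol k.+1 0%N = 0 /\ forall n, Fsol k.+1 n.+1 = Gsol k n + Fsol k.+2 n.
Proof.
apply: (coef_of_trunc _ (sadd (Gsol k) (Fsol k.+2))) => N.
rewrite polyC0 add0r trunc_add; apply: eqm_trans (trunc_Fsol N k.+1) _.
apply: eqm_trans _ (eqm_sym (eqmM (eqm_refl _ 'X)
  (eqmD (trunc_Gsol N k) (trunc_Fsol N k.+2)))).
apply: (eqm_transport (eqmM (eqm_refl _ (('X * Vt N) ^+ k.+1)) (It_rec N))) => //.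
by rewrite !exprS !exprMn; ring.
Qed.

Lemma Gsol_rec k :
  Gsol k 0%N = 0 /\ forall n, Gsol k n.+1 = Fsol k n + Gsol k.+1 n.
Proof.
apply: (coef_of_trunc _ (sadd (Fsol k) (Gsol k.+1))) => N.
rewrite polyC0 add0r trunc_add; apply: eqm_trans (trunc_Gsol N k) _.
apply: eqm_trans _ (eqm_sym (eqmM (eqm_refl _ 'X)
  (eqmD (trunc_Fsol N k) (trunc_Gsol N k.+1)))).
apply: (eqm_transport (eqmM (eqm_refl _ ('X^k * Vt N ^+ k)) (Vt_rec N))).
  by rewrite exprSr mulrA.
by rewrite !exprS !exprMn; ring.
Qed.

End Verification.

Theorem mainTheorem1 :
  (exists t : series, t 0%N = 0 /\ sX 3 =1 smul t (spow (ssub sone t) 2)) /\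
  (forall t : series, t 0%N = 0 -> sX 3 =1 smul t (spow (ssub sone t) 2) ->
    forall k : nat,
      f_ k =1 smul (shift k (spow t k)) (inv1m t) /\
      g_ k =1 shift (k + 2) (spow t k.+1)).
Proof.
split; first by exists tsol; exact: tsol_spec.
move=> t t0 t_eq.
have [F0_0 F0_S] := Fsol0_rec _ t0 t_eq.
apply: (gf_unique _ (Gsol t) F0_0 F0_S) => k.
- exact: (proj1 (FsolS_rec _ t0 t_eq k)).
- exact: (proj2 (FsolS_rec _ t0 t_eq k)).
- exact: (proj1 (Gsol_rec _ t0 t_eq k)).
- exact: (proj2 (Gsol_rec _ t0 t_eq k)).
Qed.
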